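(* Let $n,m\ge 5$ be integers with $m\equiv 0\pmod 4$ and $n\equiv 1\pmod 4$. Then $\gamma_p(C_n\times C_m)\le\frac{(n+1)m}{4}$.
   Context: All graphs are finite, simple and undirected. $C_n$ denotes the cycle of order $n$ and $G\times H$ the Cartesian product of graphs. For a graph $G$ without isolated vertices, a set $D\subseteq V(G)$ is a paired dominating set if every vertex outside $D$ has a neighbour in $D$ and the induced subgraph $G[D]$ has a perfect matching; $\gamma_p(G)$ is the minimum size of a paired dominating set. *)

From mathcomp Require Import all_boot.
Set Implicit Arguments. Unset Strict Implicit. Unset Printing Implicit Defensive.

(* Cycle C_n on vertices 'I_n: i ~ j iff j = i+1 or i = j+1 (mod n).
   For n >= 3 this is the simple cycle of order n. *)
Definition cycle_adj (n : nat) : rel 'I_n :=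
  fun i j => (i != j) && ((j == (i.+1 %% n) :> nat) || (i == (j.+1 %% n) :> nat)).
Arguments cycle_adj : clear implicits.

Definition cart_adj (T U : finType) (g : rel T) (h : rel U) : rel (T * U) :=
  fun x y => ((x.1 == y.1) && h x.2 y.2) || ((x.2 == y.2) && g x.1 y.1).

Definition dominating (T : finType) (g : rel T) (D : {set T}) : Prop :=
  forall v, v \notin D -> exists2 u, u \in D & g v u.

Definition has_perfect_matching (T : finType) (g : rel T) (D : {set T}) : Prop :=
  exists f : T -> T, forall v, v \in D ->
    [/\ f v \in D, f v != v, f (f v) = v & g v (f v)].

Definition paired_dominating (T : finType) (g : rel T) (D : {set T}) : Prop :=
  dominating g D /\ has_perfect_matching g D.

Definition is_gamma_p (T : finType) (g : rel T) (k : nat) : Prop :=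
  (exists D : {set T}, paired_dominating g D /\ #|D| = k) /\
  (forall D : {set T}, paired_dominating g D -> k <= #|D|).

From mathcomp Require Import all_boot zify.
From Stdlib Require Import Classical Wf_nat.

Set Implicit Arguments.
Unset Strict Implicit.
Unset Printing Implicit Defensive.

(* Take the even rows i of C_n x C_m and, in each of them, the columns j with
   j/2 of the same parity as i/2: rows 0 mod 4 contain columns 0,1 mod 4 and
   rows 2 mod 4 contain columns 2,3 mod 4.  Columns 2k, 2k+1 of a chosen row are
   matched horizontally.  An odd row lies between two chosen rows with
   complementary patterns, so one of them covers every column; an unchosen
   vertex of an even row sits next to the complementary block of its own row,
   also across the seam of C_m since 4 | m.  As n is odd there are (n+1)/2 even
   rows, each holding m/2 vertices. *)

Lemma is_gamma_p_exists (T : finType) (g : rel T) (D : {set T}) :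
  paired_dominating g D -> exists2 k, is_gamma_p g k & k <= #|D|.
Proof.
move=> pdD.
have [k [[[D0 [pdD0 <-]] minD0] _]] :=
  @dec_inh_nat_subset_has_unique_least_element
    (fun k => exists D, paired_dominating g D /\ #|D| = k)
    (fun k => classic _) (ex_intro _ #|D| (ex_intro _ D (conj pdD erefl))).
exists #|D0|; last by apply/leP/minD0; exists D.
by split=> [|D' pdD']; [exists D0 | apply/leP/minD0; exists D'].
Qed.

Lemma cart_adj_row (T U : finType) (g : rel T) (h : rel U) a x y :
  h x y -> cart_adj g h (a, x) (a, y).
Proof. by rewrite /cart_adj /= eqxx => ->. Qed.

Lemma cart_adj_col (T U : finType) (g : rel T) (h : rel U) x y b :
  g x y -> cart_adj g h (x, b) (y, b).
Proof. by rewrite /cart_adj /= eqxx => ->; rewrite orbT. Qed.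

Lemma cycle_adj_sym n : symmetric (cycle_adj n).
Proof. by move=> i j; rewrite /cycle_adj eq_sym orbC. Qed.

Lemma val_ordS n (i : 'I_n) : ordS i = (if i.+1 == n then 0 else i.+1) :> nat.
Proof.
rewrite /=; case: eqP => [-> | ne]; first exact: modnn.
by apply: modn_small; have := ltn_ord i; lia.
Qed.

Lemma val_ord_pred n (i : 'I_n) :
  ord_pred i = (if i == 0 :> nat then n.-1 else i.-1) :> nat.
Proof.
have lt_in := ltn_ord i; rewrite /=; case: eqP => [-> | ne].
  by rewrite modn_small //; lia.
have -> : (i + n).-1 = i.-1 + n by lia.
by rewrite modnDr modn_small //; lia.
Qed.

Lemma cycle_adj_ordS n (i : 'I_n) : 1 < n -> cycle_adj n i (ordS i).
Proof.
move=> n_gt1; rewrite /cycle_adj eqxx /= andbT.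
apply/eqP => /(congr1 (@nat_of_ord n)).
by rewrite val_ordS; case: eqP; have := ltn_ord i; lia.
Qed.

Lemma cycle_adj_ord_pred n (i : 'I_n) : 1 < n -> cycle_adj n i (ord_pred i).
Proof.
by move=> n_gt1; rewrite cycle_adj_sym -{2}(ord_predK i) cycle_adj_ordS.
Qed.

Lemma cycle_adj_flip_half m (j : 'I_m) : 4 %| m ->
  exists2 j' : 'I_m, cycle_adj m j j' & odd j'./2 = ~~ odd j./2.
Proof.
move=> m4; have lt_jm := ltn_ord j; have m_gt1 : 1 < m by lia.
case: (boolP (odd j)) => oj.
  exists (ordS j); first exact: cycle_adj_ordS.
  by rewrite val_ordS; case: eqP; lia.
exists (ord_pred j); first exact: cycle_adj_ord_pred.
by rewrite val_ord_pred; case: eqP; lia.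
Qed.

Definition sibling (j : nat) : nat := if odd j then j.-1 else j.+1.

Lemma siblingK : involutive sibling.
Proof.
move=> j; rewrite /sibling; case: (boolP (odd j)) => oj.
  have -> : odd j.-1 = false by lia.
  by rewrite /=; lia.
by rewrite /= oj.
Qed.

Lemma sibling_neq j : sibling j != j.
Proof. by rewrite /sibling; case: ifP; lia. Qed.

Lemma half_sibling j : (sibling j)./2 = j./2.
Proof. by rewrite /sibling; case: ifP; lia. Qed.

Definition sibling_ord m (j : 'I_m) : 'I_m := insubd j (sibling j).

Section SiblingOrdinal.

Variable m : nat.
Hypothesis m_even : ~~ odd m.

Lemma val_sibling_ord (j : 'I_m) : sibling_ord j = sibling j :> nat.
Proof.
have lt_sib : sibling j < m by have := ltn_ord j; rewrite /sibling; case: ifP; lia.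
by rewrite val_insubd lt_sib.
Qed.

Lemma sibling_ordK : involutive (@sibling_ord m).
Proof. by move=> j; apply: ord_inj; rewrite !val_sibling_ord siblingK. Qed.

Lemma cycle_adj_sibling (j : 'I_m) : cycle_adj m j (sibling_ord j).
Proof.
have lt_jm := ltn_ord j; have m_gt1 : 1 < m by lia.
have -> : sibling_ord j = if odd j then ord_pred j else ordS j.
  apply: ord_inj; rewrite val_sibling_ord /sibling.
  by case: ifP => oj; rewrite (val_ord_pred, val_ordS); case: eqP; lia.
by case: ifP => _; [apply: cycle_adj_ord_pred | apply: cycle_adj_ordS].
Qed.

End SiblingOrdinal.

Lemma sum1_ord_count (P : pred nat) k : \sum_(j < k | P j) 1 = count P (iota 0 k).
Proof. by rewrite -(big_mkord P (fun=> 1)) sum1_count /index_iota subn0. Qed.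

Lemma count_even_iota k : count (fun i => ~~ odd i) (iota 0 k) = uphalf k.
Proof. by elim: k => // k IH; rewrite -addn1 iotaD count_cat IH /=; lia. Qed.

Lemma count_half_parity_iota m b :
  4 %| m -> count (fun j => b == odd j./2) (iota 0 m) = m./2.
Proof.
case/dvdnP=> r ->; elim: r => // r IH.
by rewrite mulSn addnC iotaD count_cat IH /=; case: b IH; lia.
Qed.

Definition band_set n m : {set 'I_n * 'I_m} :=
  [set x : 'I_n * 'I_m | ~~ odd x.1 & odd x.1./2 == odd x.2./2].

Section BandSet.

Variables n m : nat.

Local Notation G := (cart_adj (cycle_adj n) (cycle_adj m)).

Lemma band_set_dominating : odd n -> 4 %| m -> dominating G (band_set n m).
Proof.
move=> n_odd m4 [i j]; rewrite inE /= negb_and negbK.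
case: (boolP (odd i)) => /= oi hij.
  have lt_in := ltn_ord i; have n_gt1 : 1 < n by lia.
  have v_pred : ord_pred i = i.-1 :> nat by rewrite val_ord_pred; case: eqP; lia.
  have v_succ : ordS i = i.+1 :> nat by rewrite val_ordS; case: eqP; lia.
  case: (boolP (odd i.-1./2 == odd j./2)) => h_pred.
    exists (ord_pred i, j); last exact/cart_adj_col/cycle_adj_ord_pred.
    by rewrite inE v_pred /= h_pred andbT; lia.
  exists (ordS i, j); last exact/cart_adj_col/cycle_adj_ordS.
  by rewrite inE v_succ /=; lia.
have [j' adj_jj' half_j'] := cycle_adj_flip_half j m4.
exists (i, j'); last exact: cart_adj_row.
by rewrite inE /= oi half_j'; move: hij; case: (odd i./2); case: (odd j./2).
Qed.

Lemma band_set_matching : ~~ odd m -> has_perfect_matching G (band_set n m).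
Proof.
move=> m_even.
exists (fun x => (x.1, sibling_ord x.2)) => -[i j].
rewrite inE /= => /andP [ei hij]; split.
- by rewrite inE (val_sibling_ord m_even) /= ei half_sibling.
- apply/eqP => -[/(congr1 (@nat_of_ord m))].
  by rewrite (val_sibling_ord m_even); apply/eqP/sibling_neq.
- by rewrite /= sibling_ordK.
- exact/cart_adj_row/cycle_adj_sibling.
Qed.

Lemma card_band_set : odd n -> 4 %| m -> 4 * #|band_set n m| = (n + 1) * m.
Proof.
move=> n_odd m4.
rewrite -sum1dep_card -(pair_big_dep (fun i : 'I_n => ~~ odd i)
  (fun i (j : 'I_m) => odd i./2 == odd j./2) (fun _ _ => 1)).
under eq_bigr => i _ do
  rewrite (sum1_ord_count (fun j => odd i./2 == odd j./2))
          (count_half_parity_iota _ m4) -[m./2]muln1.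
rewrite -big_distrr /= (sum1_ord_count (fun i => ~~ odd i)) count_even_iota.
case/dvdnP: m4 => r ->.
have -> : (r * 4)./2 = 2 * r by lia.
have -> : n + 1 = 2 * uphalf n by lia.
nia.
Qed.

End BandSet.

Theorem theorem5p2 (n m : nat) :
  5 <= n -> 5 <= m -> m %% 4 = 0 -> n %% 4 = 1 ->
  exists k, is_gamma_p (cart_adj (cycle_adj n) (cycle_adj m)) k /\
            4 * k <= (n + 1) * m.
Proof.
move=> _ _ m_mod4 n_mod4.
have n_odd : odd n by lia.
have m4 : 4 %| m by apply/eqP.
have m_even : ~~ odd m by lia.
have [k gamma_k le_k] := is_gamma_p_exists
  (conj (band_set_dominating n_odd m4) (band_set_matching n m_even)).
exists k; split=> //.
by rewrite -(card_band_set n_odd m4) leq_mul2l.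
Qed.
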